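(* Let $N\ge2$ and let $P$ be a symmetric probability density on $\Lambda^N$. Then there is a sequence $(P_n)$ of symmetric probability densities on $\Lambda^N$ such that each $P_n$ satisfies the condition: there is a measurable set $A\subset\Lambda$ of positive measure such that for every $x_N\in A$ there is a constant $\gamma(x_N)>0$ with $P_n(\cdot,x_N)\ge\gamma(x_N)\rho_n^{(N-1)}$ a.e. on $\Lambda^{N-1}$ (where $\rho_n^{(N-1)}$ is the $(N-1)$-marginal of $P_n$); and $P_n\to P$ in $L^1(\Lambda^N;d^Nx)$. If in addition the measure $dx$ is finite and $P$ is essentially bounded, then the sequence can be chosen so that moreover $P_n\to P$ in $L^\infty(\Lambda^N;d^Nx)$.
   Context: $(\Lambda;dx)$ is a complete $\sigma$-finite measure space with non-zero measure $dx$; $d^kx$ denotes the completion of $dx^{\otimes k}$ on $\Lambda^k$. A symmetric probability density on $\Lambda^N$ is a nonnegative, measurable, symmetric function $P$ with $\int_{\Lambda^N}P\,d^Nx=1$; its $(N-1)$-marginal is $\rho^{(N-1)}(x_1,\dots,x_{N-1}):=\int_\Lambda P(x_1,\dots,x_N)\,dx_N$. *)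

From HB Require Import structures.
From mathcomp Require Import all_boot all_order all_algebra all_fingroup.
From mathcomp Require Import all_classical all_reals all_analysis.
Set Implicit Arguments. Unset Strict Implicit. Unset Printing Implicit Defensive.
Import Order.TTheory GRing.Theory Num.Theory.
Import numFieldNormedType.Exports.
Local Open Scope classical_set_scope.
Local Open Scope ring_scope.

Section Pow.
Context {d : measure_display} {Lam : measurableType d} {R : realType}.
Variable mu : {sigma_finite_measure set Lam -> \bar R}.

(* mpow k = Lam^(k+1), built as nested pairs (((x_1, x_2), x_3), ..., x_(k+1)),
   with the product sigma-algebra. *)
Fixpoint mpow (k : nat) : {d' : measure_display & measurableType d'} :=
  match k with
  | 0 => existT _ d Lam
  | k'.+1 => existT _ _ ((projT2 (mpow k') * Lam)%type : measurableType _)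
  end.

Definition Lpow (k : nat) : Type := projT2 (mpow k).

Fixpoint mupow (k : nat) : {measure set (projT2 (mpow k)) -> \bar R} :=
  match k with
  | 0 => mu
  | k'.+1 => (mupow k' \x mu)%E
  end.

(* its completion d^(k+1)x, a measure on the Caratheodory-measurable sets *)
Definition Ltype (k : nat) := caratheodory_type ((mupow k)^*)%mu.
Definition cmupow (k : nat) : set (Ltype k) -> \bar R :=
  @completed_measure_extension _ _ _ (mupow k).

(* coordinates: coord k x i = x_(i+1); the last coordinate (ord_max) is x.2 *)
Fixpoint coord (k : nat) : Lpow k -> 'I_k.+1 -> Lam :=
  match k return Lpow k -> 'I_k.+1 -> Lam with
  | 0 => fun x _ => x
  | k'.+1 => fun x i =>
      match unlift ord_max i with
      | Some j => @coord k' x.1 j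
      | None => x.2
      end
  end.

Definition sym_prob_density (k : nat) (P : Lpow k -> R) : Prop :=
  [/\ forall x, 0 <= P x,
      measurable_fun [set: Ltype k] (P : Ltype k -> R),
      (forall (s : {perm 'I_k.+1}) (x y : Lpow k),
          (forall i, coord y i = coord x (s i)) -> P y = P x)
    & (\int[@cmupow k]_x (P x)%:E = 1)%E].

(* (N-1)-marginal of P on Lam^N, N = k+2 *)
Definition marginal (k : nat) (P : Lpow k.+1 -> R) (y : Lpow k) : \bar R :=
  (\int[mu]_t (P (y, t))%:E)%E.

Definition lower_bound_cond (k : nat) (P : Lpow k.+1 -> R) : Prop :=
  exists A : set Lam, [/\ measurable A, (0 < mu A)%E &
    forall xN, A xN -> exists gamma : R, 0 < gamma /\
      {ae @cmupow k, forall y : Ltype k,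
         (gamma%:E * marginal P y <= (P (y, xN))%:E)%E}].
End Pow.
Arguments Ltype {d Lam R} mu k.
Arguments mupow {d Lam R} mu k.
Arguments Lpow {d} Lam k.
Arguments cmupow {d Lam R} mu k _.

From Pilot Require Import Defs.
From HB Require Import structures.
From mathcomp Require Import all_boot all_order all_algebra all_fingroup.
From mathcomp Require Import all_classical all_reals all_analysis.
From mathcomp Require Import measurable_realfun ess_sup_inf lra ring.
Import Order.TTheory GRing.Theory Num.Theory.
Import numFieldNormedType.Exports.
Local Open Scope classical_set_scope.
Local Open Scope ring_scope.

(* Truncate P at height M, restrict it to the cube D^N of a set D of finite
   positive measure, scale it by 1 - eps and add the missing mass c back as the
   constant c / |D|^N on D^N.  On D^N the new density is at least c / |D|^N,
   while its marginal is at most ((1 - eps) M + c / |D|^N) |D|, which gives the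
   lower bound.  The L^1 distance to P is at most 2 c; letting D exhaust Lambda,
   M -> oo and eps -> 0, monotone convergence shows that the truncation loses
   no mass in the limit, so c -> 0.  When dx is finite and P <= B a.e., take
   D = Lambda and M >= B: then the sup distance is at most eps B + c / |Lambda|^N. *)

Section cube.
Context {d : measure_display} {Lam : measurableType d}.

Definition cube (D : set Lam) (k : nat) : set (Lpow Lam k) :=
  [set x | forall i, D (Defs.coord x i)].

Lemma cube0 D : cube D 0 = D.
Proof. by apply/seteqP; split => [x /(_ ord0)|x Dx i]. Qed.

Lemma cubeS D k : cube D k.+1 = cube D k `*` D.
Proof.
apply/seteqP; split => x /=.
- move=> Dx; split; last by have := Dx ord_max; rewrite /= unlift_none.
  by move=> j; have := Dx (lift ord_max j); rewrite /= liftK.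
- by move=> [Dx1 Dx2] i /=; case: unliftP.
Qed.

Lemma measurable_cube D k : measurable D -> measurable (cube D k).
Proof.
move=> mD; elim: k => [|k IHk]; first by rewrite cube0.
by rewrite cubeS; exact: measurableX.
Qed.

Lemma subset_cube D1 D2 k : D1 `<=` D2 -> cube D1 k `<=` cube D2 k.
Proof. by move=> D12 x /= D1x i; apply: D12. Qed.

Lemma cube_perm D k (s : {perm 'I_k.+1}) (x y : Lpow Lam k) :
  (forall i, Defs.coord y i = Defs.coord x (s i)) ->
  (y \in cube D k) = (x \in cube D k).
Proof.
move=> yx; apply/idP/idP => /set_mem /= Dx; apply/mem_set => i;
  last by rewrite yx.
by have := Dx (s^-1 i)%g; rewrite yx permKV.
Qed.

Lemma cube_setT k : cube [set: Lam] k = [set: Lpow Lam k].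
Proof. by apply/seteqP; split. Qed.
Lemma cube_cover (F : nat -> set Lam) k :
  (forall m n, (m <= n)%N -> F m `<=` F n) -> (forall x, exists m, F m x) ->
  forall x : Lpow Lam k, exists m, cube (F m) k x.
Proof.
move=> Fnd Fcov x.
have /choice[f Ff] : forall i : 'I_k.+1, exists m, F m (Defs.coord x i).
  by move=> i; exact: Fcov.
by exists (\max_i f i) => i; apply: Fnd (Ff i); exact: leq_bigmax.
Qed.
End cube.

Section completed_product_measure.
Context {d : measure_display} {Lam : measurableType d} {R : realType}
  (mu : {sigma_finite_measure set Lam -> \bar R}).

Lemma mupow_cube D k r : measurable D -> mu D = r%:E ->
  mupow mu k (cube D k) = (r ^+ k.+1)%:E.
Proof.
move=> mD muD; elim: k => [|k IHk]; first by rewrite cube0 /= muD expr1.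
rewrite cubeS /= product_measure1E //; last exact: measurable_cube.
by rewrite IHk muD -EFinM [in RHS]exprSr.
Qed.

Lemma measurable_Ltype {k} {A : set (Lpow Lam k)} :
  measurable A -> measurable (A : set (Ltype mu k)).
Proof. exact: caratheodory_measurable_mu_ext. Qed.

Lemma cmupowE k (A : set (Lpow Lam k)) : measurable A ->
  cmupow mu k A = mupow mu k A.
Proof. exact: measurable_mu_extE. Qed.

Lemma cmupow_cube D k r : measurable D -> mu D = r%:E ->
  cmupow mu k (cube D k) = (r ^+ k.+1)%:E.
Proof.
move=> mD muD; rewrite cmupowE; [exact: mupow_cube|].
exact: (measurable_cube D k mD).
Qed.
End completed_product_measure.

(* Unlike [ge0_le_integral], no measurability is needed, as the integral of a
   nonnegative function is a supremum over the simple functions below it.  This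
   matters for marginals: sections of a function that is measurable for the
   completed product measure need not be measurable. *)
Lemma ge0_le_integralT {dT} {T : measurableType dT} {R : realType}
  (m : {measure set T -> \bar R}) (f g : T -> \bar R) :
  (forall x, (0 <= f x)%E) -> (forall x, (f x <= g x)%E) ->
  (\int[m]_x f x <= \int[m]_x g x)%E.
Proof.
move=> f0 fg; have g0 x : (0 <= g x)%E by exact: le_trans (f0 x) (fg x).
rewrite !ge0_integralTE //; apply: le_ereal_sup => _ [h hf <-].
by exists h => // x; exact: le_trans (hf x) (fg x).
Qed.

Lemma ge0_integralZ_indic {dT} {T : measurableType dT} {R : realType}
  (m : {measure set T -> \bar R}) (A : set T) (c : R) : measurable A -> 0 <= c ->
  (\int[m]_x (c * \1_A x)%:E = c%:E * m A)%E.
Proof.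
move=> mA c_ge0; under eq_integral do rewrite EFinM.
rewrite ge0_integralZl_EFin ?integral_indic ?setIT //.
exact/measurable_EFinP/measurable_indic.
Qed.

Lemma Lnormy_ae_bounded {dT} {T : measurableType dT} {R : realType}
  (m : {measure set T -> \bar R}) (f : T -> R) :
  (Lnorm m +oo%E (fun x => (f x)%:E) < +oo)%E ->
  exists B : R, 0 <= B /\ \forall x \ae m, f x <= B.
Proof.
rewrite unlock /=; case: ifPn => [_|mT_le0] fin; last first.
  exists 0; split => //; exists [set: T]; split => //.
  by apply/eqP; rewrite eq_le measure_ge0 andbT leNgt.
move: fin (ess_sup_ge m (abse \o (EFin \o f))).
case: (ess_sup _ _) => [e| |] // _ fe.
- exists `|e|; split => //; apply: filterS fe => x /=.
  rewrite lee_fin => fxe.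
  exact: le_trans (ler_norm _) (le_trans fxe (ler_norm _)).
- by exists 0; split => //; apply: filterS fe => x /=; rewrite leeNy_eq.
Qed.

Definition prob_density {d} {T : measurableType d} {R : realType}
    (nu : {measure set T -> \bar R}) (P : T -> R) : Prop :=
  [/\ forall x, 0 <= P x, measurable_fun [set: T] P & (\int[nu]_x (P x)%:E = 1)%E].

Section regularization.
Context {d : measure_display} {T : measurableType d} {R : realType}
  {nu : {measure set T -> \bar R}} {P : T -> R} {C : set T} {v M eps : R}.

Definition truncated (x : T) : R := Num.min (P x) M * \1_C x.

Definition truncated_mass : R := fine (\int[nu]_x (truncated x)%:E)%E.

Definition mass_defect : R := 1 - (1 - eps) * truncated_mass.

Definition regularized (x : T) : R :=
  (1 - eps) * truncated x + mass_defect / v * \1_C x.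

Hypothesis HP : prob_density nu P.
Hypothesis mC : measurable C.
Hypothesis nuC : nu C = v%:E.
Hypothesis v_gt0 : 0 < v.
Hypothesis M_ge0 : 0 <= M.
Hypothesis eps_gt0 : 0 < eps.
Hypothesis eps_le1 : eps <= 1.

Let P_ge0 x : 0 <= P x. Proof. by case: HP. Qed.
Let mP : measurable_fun [set: T] P. Proof. by case: HP. Qed.
Let intP : (\int[nu]_x (P x)%:E = 1)%E. Proof. by case: HP. Qed.

Lemma truncated_ge0 x : 0 <= truncated x.
Proof. by rewrite mulr_ge0 ?le_min ?P_ge0 ?M_ge0 ?indicE. Qed.

Lemma truncated_le x : truncated x <= P x.
Proof.
rewrite /truncated indicE; case: (_ \in _); rewrite ?mulr1 ?mulr0 ?P_ge0 //.
by rewrite ge_min lexx.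
Qed.

Lemma measurable_truncated : measurable_fun [set: T] truncated.
Proof.
apply: measurable_funM; last exact: measurable_indic.
exact: measurable_minr mP (measurable_cst _).
Qed.

Let mtruncatedE : measurable_fun [set: T] (fun x => (truncated x)%:E).
Proof. exact/measurable_EFinP/measurable_truncated. Qed.

Let truncatedE_ge0 x : [set: T] x -> (0 <= (truncated x)%:E)%E.
Proof. by rewrite lee_fin truncated_ge0. Qed.

Lemma integral_truncated_le1 : (\int[nu]_x (truncated x)%:E <= 1)%E.
Proof.
rewrite -intP; apply: ge0_le_integral => //; first exact/measurable_EFinP.
by move=> x _; rewrite lee_fin truncated_le.
Qed.

Lemma integral_truncated :
  (\int[nu]_x (truncated x)%:E)%E = truncated_mass%:E.
Proof.
rewrite /truncated_mass fineK // ge0_fin_numE; last exact: integral_ge0.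
exact: le_lt_trans integral_truncated_le1 (ltry _).
Qed.

Lemma truncated_mass_le1 : truncated_mass <= 1.
Proof. by rewrite -lee_fin -integral_truncated integral_truncated_le1. Qed.

Let one_minus_eps_ge0 : 0 <= 1 - eps. Proof. by rewrite subr_ge0. Qed.

Let integral_scaled_truncated :
  (\int[nu]_x ((1 - eps) * truncated x)%:E = ((1 - eps) * truncated_mass)%:E)%E.
Proof.
under eq_integral do rewrite EFinM.
by rewrite ge0_integralZl_EFin // integral_truncated.
Qed.

Lemma mass_defect_ge_eps : eps <= mass_defect.
Proof.
have : 0 <= (1 - eps) * (1 - truncated_mass).
  by rewrite mulr_ge0 // subr_ge0 truncated_mass_le1.
by rewrite /mass_defect; lra.
Qed.

Let height_gt0 : 0 < mass_defect / v.
Proof. by rewrite divr_gt0 // (lt_le_trans eps_gt0 mass_defect_ge_eps). Qed.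

Let height_indicE_ge0 x : [set: T] x -> (0 <= (mass_defect / v * \1_C x)%:E)%E.
Proof. by rewrite lee_fin mulr_ge0 ?indicE // ltW. Qed.

Let mheight_indicE :
  measurable_fun [set: T] (fun x => (mass_defect / v * \1_C x)%:E).
Proof. exact/measurable_EFinP/measurable_funM/measurable_indic. Qed.

Let integral_height_indic :
  (\int[nu]_x (mass_defect / v * \1_C x)%:E = mass_defect%:E)%E.
Proof.
by rewrite ge0_integralZ_indic ?ltW // nuC -EFinM divfK ?gt_eqF.
Qed.

Lemma regularized_ge0 x : 0 <= regularized x.
Proof.
apply: addr_ge0; apply: mulr_ge0; rewrite ?truncated_ge0 ?indicE //.
exact: ltW.
Qed.

Lemma measurable_regularized : measurable_fun [set: T] regularized.
Proof.
apply: measurable_funD; apply: measurable_funM => //.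
exact: measurable_truncated.
Qed.

Lemma integral_regularized : (\int[nu]_x (regularized x)%:E = 1)%E.
Proof.
under eq_integral do rewrite EFinD.
rewrite ge0_integralD //; last 2 first.
- by move=> x _; rewrite lee_fin mulr_ge0 ?truncated_ge0.
- by under eq_fun do rewrite EFinM; exact: measurable_funeM.
rewrite integral_scaled_truncated integral_height_indic -EFinD.
by congr (_%:E); rewrite /mass_defect; ring.
Qed.

Lemma regularized_on x : C x ->
  regularized x = (1 - eps) * Num.min (P x) M + mass_defect / v.
Proof. by move=> Cx; rewrite /regularized /truncated indicE mem_set ?mulr1. Qed.

Lemma regularized_off x : ~ C x -> regularized x = 0.
Proof.
by move=> Cx; rewrite /regularized /truncated indicE memNset ?mulr0 ?addr0.
Qed.

Lemma regularized_ge_height x : C x -> mass_defect / v <= regularized x.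
Proof. by move=> Cx; rewrite regularized_on // lerDr mulr_ge0 // le_min P_ge0. Qed.

Lemma regularized_le x : regularized x <= (1 - eps) * M + mass_defect / v.
Proof.
have [Cx|Cx] := pselect (C x).
  by rewrite regularized_on // lerD2r ler_wpM2l // ge_min lexx orbT.
rewrite regularized_off //.
exact: addr_ge0 (mulr_ge0 one_minus_eps_ge0 M_ge0) (ltW height_gt0).
Qed.

Lemma L1_regularized_le :
  (Lnorm nu 1%E (fun x => (regularized x - P x)%:E) <= (2 * mass_defect)%:E)%E.
Proof.
pose a x := P x - (1 - eps) * truncated x.
have a_ge0 x : [set: T] x -> (0 <= (a x)%:E)%E.
  move=> _; rewrite lee_fin subr_ge0; apply: le_trans (truncated_le x).
  by rewrite ler_piMl ?truncated_ge0 // gerBl ltW.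
have ma : measurable_fun [set: T] (fun x => (a x)%:E).
  exact/measurable_EFinP/measurable_funB/measurable_funM/measurable_truncated.
have int_a : (\int[nu]_x (a x)%:E = mass_defect%:E)%E.
  have : (\int[nu]_x ((a x)%:E + ((1 - eps) * truncated x)%:E) = 1)%E.
    by rewrite -intP; apply: eq_integral => x _; rewrite -EFinD subrK.
  rewrite ge0_integralD //; last 2 first.
  - by move=> x _; rewrite lee_fin mulr_ge0 ?truncated_ge0.
  - by under eq_fun do rewrite EFinM; exact: measurable_funeM.
  rewrite integral_scaled_truncated.
  move=> /(congr1 (fun z => z - ((1 - eps) * truncated_mass)%:E)%E).
  by rewrite addeK // -EFinB.
rewrite Lnorm1; apply: le_trans (@ge0_le_integral _ _ _ nu _ measurableT _
  (fun x => (a x)%:E + (mass_defect / v * \1_C x)%:E)%E _ _ _ _) _.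
- by move=> x _; exact: abse_ge0.
- exact/measurableT_comp/measurable_EFinP/measurable_funB/mP/measurable_regularized.
- exact: emeasurable_funD.
- move=> x _; rewrite abse_EFin -EFinD lee_fin.
  have -> : regularized x - P x = - a x + mass_defect / v * \1_C x.
    by rewrite /a /regularized; ring.
  apply: le_trans (ler_normD _ _) _; rewrite normrN.
  by rewrite !ger0_norm -?lee_fin ?a_ge0 ?height_indicE_ge0.
- by rewrite ge0_integralD // int_a integral_height_indic -EFinD mulr2n mulrDl mul1r.
Qed.

Lemma Linfty_regularized_le (B : R) : C = setT -> 0 <= B -> B <= M ->
  (\forall x \ae nu, P x <= B) ->
  (Lnorm nu +oo%E (fun x => (regularized x - P x)%:E)
     <= (eps * B + mass_defect / v)%:E)%E.
Proof.
move=> CT B_ge0 BM PB.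
rewrite unlock /=; case: ifPn => _; last first.
  rewrite lee_fin.
  exact: addr_ge0 (mulr_ge0 (ltW eps_gt0) B_ge0) (ltW height_gt0).
apply/ess_supP; apply: filterS PB => x PxB /=.
rewrite regularized_on ?CT // (min_idPl (le_trans PxB BM)) lee_fin.
have -> : (1 - eps) * P x + mass_defect / v - P x = mass_defect / v - eps * P x.
  by ring.
apply: le_trans (ler_normB _ _) _.
rewrite (ger0_norm (ltW height_gt0)) ger0_norm; last first.
  exact: mulr_ge0 (ltW eps_gt0) (P_ge0 x).
by have := ler_wpM2l (ltW eps_gt0) PxB; lra.
Qed.
End regularization.

Arguments truncated {d T R} P C M x.
Arguments truncated_mass {d T R} nu P C M.
Arguments mass_defect {d T R} nu P C M eps.
Arguments regularized {d T R} nu P C v M eps x.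

Lemma harmonic_le1 {R : numFieldType} m : harmonic m <= 1 :> R.
Proof. by rewrite /harmonic /= invf_le1 ?ltr0n // ler1n. Qed.

Section regularization_limit.
Context {d : measure_display} {T : measurableType d} {R : realType}
  {nu : {measure set T -> \bar R}} {P : T -> R}
  {Cs : nat -> set T} {vs : nat -> R} {B : R}.
Hypothesis HP : prob_density nu P.
Hypothesis mCs : forall m, measurable (Cs m).
Hypothesis nuCs : forall m, nu (Cs m) = (vs m)%:E.
Hypothesis vs_gt0 : forall m, 0 < vs m.
Hypothesis Cs_nd : forall m n, (m <= n)%N -> Cs m `<=` Cs n.
Hypothesis Cs_cover : forall x, exists m, Cs m x.
Hypothesis B_ge0 : 0 <= B.

Definition regularized_seq (m : nat) : T -> R :=
  regularized nu P (Cs m) (vs m) (B + m%:R) (harmonic m).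

Let P_ge0 x : 0 <= P x. Proof. by case: HP. Qed.
Let M_ge0 m : 0 <= B + m%:R. Proof. by rewrite addr_ge0. Qed.

Lemma truncated_seq_nd x :
  {homo (fun m => truncated P (Cs m) (B + m%:R) x) : m n / (m <= n)%N >-> m <= n}.
Proof.
move=> m n mn; rewrite /truncated !indicE.
have [Cmx|Cmx] := boolP (x \in Cs m); last first.
  by rewrite mulr0 mulr_ge0 ?le_min ?P_ge0 ?M_ge0 ?ler0n.
have -> : x \in Cs n by apply/mem_set/(Cs_nd _ _ mn)/set_mem.
by rewrite !mulr1 le_min !ge_min lexx /= lerD2l ler_nat mn orbT.
Qed.

Lemma truncated_seq_eventually x :
  exists N, forall m, (N <= m)%N -> truncated P (Cs m) (B + m%:R) x = P x.
Proof.
have [m1 Cx] := Cs_cover x.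
exists (maxn m1 (Num.truncn (P x)).+1) => m; rewrite geq_max => /andP[m1m m2m].
rewrite /truncated indicE mem_set ?mulr1; last exact: Cs_nd _ _ m1m _ Cx.
apply/min_idPl; apply: le_trans (ltW (truncnS_gt (P x))) _.
by rewrite -[X in X <= _]add0r lerD // ler_nat.
Qed.

Lemma truncated_mass_cvg :
  truncated_mass nu P (Cs m) (B + m%:R) @[m --> \oo] --> (1 : R).
Proof.
have [_ mP intP] := HP.
pose g m x := (truncated P (Cs m) (B + m%:R) x)%:E.
have mg m : measurable_fun [set: T] (g m).
  exact/measurable_EFinP/(measurable_truncated HP (mCs m)).
have g_ge0 m x : [set: T] x -> (0 <= g m x)%E.
  by move=> _; rewrite lee_fin; exact: truncated_ge0 HP (M_ge0 m) x.
have g_nd x : [set: T] x -> {homo g ^~ x : m n / (m <= n)%N >-> (m <= n)%E}.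
  by move=> _ m n mn; rewrite lee_fin truncated_seq_nd.
have := @cvg_monotone_convergence _ _ _ nu _ measurableT _ mg g_ge0 g_nd.
rewrite (eq_integral (fun x => (P x)%:E)) ?intP; first by move/fine_cvg.
move=> x _; apply: cvg_lim => //; apply: cvg_near_cst.
have [N hN] := truncated_seq_eventually x.
by exists N => // m /= Nm; rewrite /g hN.
Qed.

Lemma mass_defect_cvg :
  mass_defect nu P (Cs m) (B + m%:R) (harmonic m) @[m --> \oo] --> (0 : R).
Proof.
have := cvgB (cvg_cst (1 : R))
  (cvgM (cvgB (cvg_cst (1 : R)) (@cvg_harmonic R)) truncated_mass_cvg).
by rewrite subr0 mul1r subrr => h; exact: h.
Qed.

Lemma regularized_seq_L1_cvg :
  Lnorm nu 1%E (fun x => (regularized_seq m x - P x)%:E) @[m --> \oo] --> 0%E.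
Proof.
apply: (@squeeze_cvge _ _ _ _ (cst 0%E) _
  (fun m => (2 * mass_defect nu P (Cs m) (B + m%:R) (harmonic m))%:E)).
- apply: nearW => m; rewrite Lnorm_ge0 /=.
  exact: L1_regularized_le HP (mCs m) (nuCs m) (vs_gt0 m) (M_ge0 m)
    (harmonic_gt0 m) (harmonic_le1 m).
- exact: cvg_cst.
- apply: cvg_EFin; first exact: nearW.
  by have := cvgM (cvg_cst (2 : R)) mass_defect_cvg; rewrite mulr0 => h; exact: h.
Qed.

Lemma regularized_seq_Linfty_cvg (v : R) :
  (forall m, Cs m = setT) -> (forall m, vs m = v) ->
  (\forall x \ae nu, P x <= B) ->
  Lnorm nu +oo%E (fun x => (regularized_seq m x - P x)%:E) @[m --> \oo] --> 0%E.
Proof.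
move=> CsT vsv PB.
apply: (@squeeze_cvge _ _ _ _ (cst 0%E) _ (fun m =>
  (harmonic m * B + mass_defect nu P (Cs m) (B + m%:R) (harmonic m) / v)%:E)).
- apply: nearW => m; rewrite Lnorm_ge0 /= -(vsv m).
  apply: (Linfty_regularized_le HP (mCs m) (vs_gt0 m) (M_ge0 m) (harmonic_gt0 m)
    (harmonic_le1 m) B (CsT m) B_ge0 _ PB).
  by rewrite lerDl.
- exact: cvg_cst.
- apply: cvg_EFin; first exact: nearW.
  have := cvgD (cvgM (@cvg_harmonic R) (cvg_cst B))
    (cvgM mass_defect_cvg (cvg_cst v^-1)).
  by rewrite !mul0r addr0 => h; exact: h.
Qed.
End regularization_limit.
Arguments regularized_seq {d T R} nu P Cs vs B m.

Definition exhausting {d} {T : measurableType d} {R : realType}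
    (mu : {measure set T -> \bar R}) (F : nat -> set T) : Prop :=
  [/\ forall m, measurable (F m), forall m, (0 < mu (F m) < +oo)%E,
      forall m n, (m <= n)%N -> F m `<=` F n & forall x, exists m, F m x].

Lemma exhausting_setT {d} {T : measurableType d} {R : realType}
    (mu : {measure set T -> \bar R}) :
  (0 < mu [set: T] < +oo)%E -> exhausting mu (fun=> [set: T]).
Proof.
by move=> muT; split=> [m|m|m n _|x] //; exists 0%N.
Qed.

Lemma sigma_finite_exhausting {d} {T : measurableType d} {R : realType}
    (mu : {sigma_finite_measure set T -> \bar R}) :
  mu [set: T] != 0%E -> exists F, exhausting mu F.
Proof.
move=> mu0; have /sigma_finiteP [F [FT Fnd Ffin]] := sigma_finiteT mu.
have mF i : measurable (F i) by case: (Ffin i).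
have Fle m n : (m <= n)%N -> F m `<=` F n.
  by move=> mn; rewrite -subsetEset; exact: Fnd.
have [m0 Fm0_gt0] : exists m0, (0 < mu (F m0))%E.
  apply: contrapT => /forallNP F0; move/eqP: mu0; apply.
  apply/eqP; rewrite eq_le measure_ge0 andbT.
  apply: le_trans (@measure_sigma_subadditive _ _ _ mu _ F mF measurableT _) _.
    by rewrite -FT.
  rewrite eseries0 // => i _ _.
  by move/negP: (F0 i); rewrite lt0e measure_ge0 andbT negbK => /eqP.
exists (fun m => F (m + m0)%N); split.
- by move=> m; exact: mF.
- move=> m; case: (Ffin (m + m0)%N) => _ ->; rewrite andbT.
  apply: lt_le_trans Fm0_gt0 _; apply: le_measure; rewrite ?inE //.
  exact: Fle (leq_addl _ _).
- by move=> m n mn; apply: Fle; rewrite leq_add2r.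
- move=> x; have : [set: T] x by [].
  rewrite FT => -[i _ Fix]; exists i; apply: (Fle i) => //.
  exact: leq_addr.
Qed.

Section cube_regularization.
Context {d : measure_display} {Lam : measurableType d} {R : realType}
  (mu : {sigma_finite_measure set Lam -> \bar R}) {k : nat}
  (P : Lpow Lam k.+1 -> R).
Hypothesis HP : sym_prob_density mu P.

Let HPd : prob_density (cmupow mu k.+1) (P : Ltype mu k.+1 -> R).
Proof. by case: HP. Qed.

Definition cube_regularized (D : set Lam) (r M eps : R) : Lpow Lam k.+1 -> R :=
  regularized (cmupow mu k.+1) P (cube D k.+1) (r ^+ k.+2) M eps.

Lemma indic_cubeS D (y : Lpow Lam k) t :
  \1_(cube D k.+1) (y, t) = \1_(cube D k) y * \1_D t :> R.
Proof.
by rewrite !indicE cubeS in_setX /=; case: (_ \in _); case: (_ \in _);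
  rewrite ?mul1r ?mul0r.
Qed.

Section fixed_cube.
Variables (D : set Lam) (r M eps : R).
Hypothesis mD : measurable D.
Hypothesis muD : mu D = r%:E.
Hypothesis r_gt0 : 0 < r.
Hypothesis M_ge0 : 0 <= M.
Hypothesis eps_gt0 : 0 < eps.
Hypothesis eps_le1 : eps <= 1.

Let mC : measurable (cube D k.+1 : set (Ltype mu k.+1)).
Proof. exact/measurable_Ltype/measurable_cube. Qed.
Let nuC : cmupow mu k.+1 (cube D k.+1) = (r ^+ k.+2)%:E.
Proof. exact: cmupow_cube. Qed.
Let v_gt0 : 0 < r ^+ k.+2. Proof. exact: exprn_gt0. Qed.

(* The generic lemmas are instantiated explicitly: letting unification identify
   [Ltype mu k.+1] with [Lpow Lam k.+1] is very slow. *)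
Let reg_ge0 (x : Lpow Lam k.+1) : 0 <= cube_regularized D r M eps x.
Proof.
exact: (@regularized_ge0 _ (Ltype mu k.+1) R (cmupow mu k.+1) P (cube D k.+1)
  (r ^+ k.+2) M eps HPd mC v_gt0 M_ge0 eps_gt0 eps_le1 x).
Qed.

Let reg_le (x : Lpow Lam k.+1) : cube_regularized D r M eps x <=
  (1 - eps) * M + mass_defect (cmupow mu k.+1) P (cube D k.+1) M eps / r ^+ k.+2.
Proof.
exact: (@regularized_le _ (Ltype mu k.+1) R (cmupow mu k.+1) P (cube D k.+1)
  (r ^+ k.+2) M eps HPd mC v_gt0 M_ge0 eps_gt0 eps_le1 x).
Qed.

Let reg_off (x : Lpow Lam k.+1) :
  ~ cube D k.+1 x -> cube_regularized D r M eps x = 0.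
Proof.
exact: (@regularized_off _ (Ltype mu k.+1) R (cmupow mu k.+1) P (cube D k.+1)
  (r ^+ k.+2) M eps x).
Qed.

Let reg_ge_height (x : Lpow Lam k.+1) : cube D k.+1 x ->
  mass_defect (cmupow mu k.+1) P (cube D k.+1) M eps / r ^+ k.+2
    <= cube_regularized D r M eps x.
Proof.
exact: (@regularized_ge_height _ (Ltype mu k.+1) R (cmupow mu k.+1) P
  (cube D k.+1) (r ^+ k.+2) M eps HPd M_ge0 eps_le1 x).
Qed.

Lemma cube_regularized_sym_prob_density :
  sym_prob_density mu (cube_regularized D r M eps).
Proof.
have [_ _ Psym _] := HP; split.
- exact: reg_ge0.
- exact: measurable_regularized HPd mC.
- move=> s x y yx; rewrite /cube_regularized /regularized /truncated !indicE.
  by rewrite (Psym s x y yx) (cube_perm D _ _ _ _ yx).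
- exact: integral_regularized HPd mC nuC v_gt0 M_ge0 eps_gt0 eps_le1.
Qed.

Lemma cube_regularized_lower_bound :
  lower_bound_cond mu (cube_regularized D r M eps).
Proof.
set h := mass_defect (cmupow mu k.+1) P (cube D k.+1) M eps / r ^+ k.+2.
have h_gt0 : 0 < h.
  rewrite divr_gt0 //; apply: lt_le_trans eps_gt0 _.
  exact: mass_defect_ge_eps HPd mC M_ge0 eps_le1.
set K := (1 - eps) * M + h.
have K_gt0 : 0 < K by rewrite ltr_wpDl // mulr_ge0 // subr_ge0.
have marginal_le y :
    (marginal mu (cube_regularized D r M eps) y <= (K * \1_(cube D k) y * r)%:E)%E.
  rewrite /marginal; apply: le_trans (ge0_le_integralT mu _ (fun t =>
    (K * \1_(cube D k) y * \1_D t)%:E) _ _) _.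
  - by move=> t; rewrite lee_fin.
  - move=> t; rewrite lee_fin -mulrA -indic_cubeS indicE.
    have [Cyt|Cyt] := pselect (cube D k.+1 (y, t)).
      by rewrite mem_set // mulr1; exact: reg_le.
    by rewrite memNset // mulr0 reg_off.
  - have c_ge0 : 0 <= K * \1_(cube D k) y by rewrite mulr_ge0 ?indicE // ltW.
    by rewrite ge0_integralZ_indic // (_ : _ D = r%:E) // -EFinM.
exists D; split => //; first by rewrite muD lte_fin.
have gamma_gt0 : 0 < h / (K * r) by exact: divr_gt0 h_gt0 (mulr_gt0 K_gt0 r_gt0).
move=> xN DxN; exists (h / (K * r)); split => //.
apply: aeW => y; apply: le_trans (lee_wpmul2l _ (marginal_le y)) _.
  by rewrite lee_fin; exact: ltW.
rewrite -EFinM lee_fin (mulrAC K) mulrA divfK; last by rewrite mulf_neq0 // gt_eqF.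
rewrite indicE; have [Dy|Dy] := pselect (cube D k y); last first.
  by rewrite memNset // mulr0.
rewrite mem_set // mulr1.
by apply: reg_ge_height; rewrite cubeS.
Qed.
End fixed_cube.

Variables (F : nat -> set Lam) (B : R).
Hypothesis hF : exhausting mu F.
Hypothesis B_ge0 : 0 <= B.

Definition cube_approx : nat -> Lpow Lam k.+1 -> R :=
  regularized_seq (cmupow mu k.+1) P (fun m => cube (F m) k.+1)
    (fun m => fine (mu (F m)) ^+ k.+2) B.

Let mF m : measurable (F m). Proof. by case: hF. Qed.
Let fineF_gt0 m : 0 < fine (mu (F m)).
Proof. by case: hF => _ /(_ m) F0oo _ _; exact: fine_gt0. Qed.
Let muF m : mu (F m) = (fine (mu (F m)))%:E.
Proof.
by case: hF => _ /(_ m) /andP[F0 Foo] _ _; rewrite fineK // ge0_fin_numE // ltW.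
Qed.

Lemma cube_approx_density m :
  sym_prob_density mu (cube_approx m) /\ lower_bound_cond mu (cube_approx m).
Proof.
have M_ge0 : 0 <= B + m%:R by rewrite addr_ge0.
split.
- exact: cube_regularized_sym_prob_density (mF m) (muF m) (fineF_gt0 m) M_ge0
    (harmonic_gt0 m) (harmonic_le1 m).
- exact: cube_regularized_lower_bound (mF m) (muF m) (fineF_gt0 m) M_ge0
    (harmonic_gt0 m) (harmonic_le1 m).
Qed.

Let mcubes m : measurable (cube (F m) k.+1 : set (Ltype mu k.+1)).
Proof. exact/measurable_Ltype/measurable_cube. Qed.
Let cmupow_cubes m :
  cmupow mu k.+1 (cube (F m) k.+1) = (fine (mu (F m)) ^+ k.+2)%:E.
Proof. exact: cmupow_cube. Qed.
Let cubes_gt0 m : 0 < fine (mu (F m)) ^+ k.+2. Proof. exact: exprn_gt0. Qed.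
Let cubes_nd m n : (m <= n)%N -> cube (F m) k.+1 `<=` cube (F n) k.+1.
Proof. by case: hF => _ _ Fnd _ mn; apply: subset_cube; exact: Fnd. Qed.
Let cubes_cover (x : Ltype mu k.+1) : exists m, cube (F m) k.+1 x.
Proof. by case: hF => _ _ Fnd Fcov; exact: cube_cover. Qed.

Lemma cube_approx_L1_cvg :
  Lnorm (cmupow mu k.+1) 1%E (fun x : Ltype mu k.+1 => (cube_approx m x - P x)%:E)
    @[m --> \oo] --> 0%E.
Proof.
exact: regularized_seq_L1_cvg HPd mcubes cmupow_cubes cubes_gt0 cubes_nd
  cubes_cover B_ge0.
Qed.

Lemma cube_approx_Linfty_cvg : (forall m, F m = setT) ->
  (\forall x \ae cmupow mu k.+1, P x <= B) ->
  Lnorm (cmupow mu k.+1) +oo%E (fun x : Ltype mu k.+1 => (cube_approx m x - P x)%:E)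
    @[m --> \oo] --> 0%E.
Proof.
move=> FT PB.
have cubesT m : cube (F m) k.+1 = [set: Ltype mu k.+1] by rewrite FT cube_setT.
have vsT m : fine (mu (F m)) ^+ k.+2 = fine (mu [set: Lam]) ^+ k.+2 by rewrite FT.
exact: (regularized_seq_Linfty_cvg HPd mcubes cubes_gt0 cubes_nd cubes_cover B_ge0 _
  cubesT vsT PB).
Qed.
End cube_regularization.

Theorem theorem4 (d : measure_display) (Lam : measurableType d) (R : realType)
    (mu : {sigma_finite_measure set Lam -> \bar R}) (n : nat)
    (P : Lpow Lam n.+1 -> R) :
  measure_is_complete mu ->
  mu [set: Lam] != 0%E ->
  sym_prob_density mu P ->
  (exists Pn : nat -> Lpow Lam n.+1 -> R,
      (forall m, sym_prob_density mu (Pn m) /\ lower_bound_cond mu (Pn m)) /\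
      Lnorm (cmupow mu n.+1) 1%E (fun x : Ltype mu n.+1 => (Pn m x - P x)%:E)
        @[m --> \oo] --> 0%E) /\
  ((mu [set: Lam] < +oo)%E ->
   (Lnorm (cmupow mu n.+1) +oo%E (fun x : Ltype mu n.+1 => (P x)%:E) < +oo)%E ->
   exists Pn : nat -> Lpow Lam n.+1 -> R,
      [/\ forall m, sym_prob_density mu (Pn m) /\ lower_bound_cond mu (Pn m),
          Lnorm (cmupow mu n.+1) 1%E (fun x : Ltype mu n.+1 => (Pn m x - P x)%:E)
            @[m --> \oo] --> 0%E &
          Lnorm (cmupow mu n.+1) +oo%E (fun x : Ltype mu n.+1 => (Pn m x - P x)%:E)
            @[m --> \oo] --> 0%E]).
Proof.
move=> _ mu0 HP; split.
  have [F hF] := sigma_finite_exhausting _ mu0.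
  exists (cube_approx mu P F 0); split.
  - by move=> m; exact: cube_approx_density.
  - exact: cube_approx_L1_cvg.
move=> muT_fin /Lnormy_ae_bounded[B [B_ge0 PB]].
have hT : exhausting mu (fun=> [set: Lam]).
  by apply: exhausting_setT; rewrite muT_fin andbT lt0e mu0 measure_ge0.
exists (cube_approx mu P (fun=> [set: Lam]) B); split.
- by move=> m; exact: cube_approx_density.
- exact: cube_approx_L1_cvg.
- exact: cube_approx_Linfty_cvg.
Qed.
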